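(* Assume in addition $L\ge\mu$. Consider any sequences generated by Algorithm 4, let $\sigma:=\hat\sigma+\sigma_u$, $x^*$ the unique minimizer of $h=f+g$, $d_0:=\|x^*-x^0\|$ and $\gamma:=\sqrt{\sigma_u/(1+\sigma_u)}$, $\rho:=1-\gamma\sqrt{\mu/L}$. Then: (a) for all $k\ge1$, $h(y^k)-h(x^* )\le\frac{Ld_0^2}{2\sigma_u}\rho^{k-1}$ and $\max\{\|x^*-y^k\|,\|x^*-x^k\|\}\le\sqrt{\frac{L}{\sigma_u\mu}}\,d_0\,\rho^{(k-1)/2}$; (b) for all $k\ge1$, $v^{k+1}\in\partial_{\varepsilon_{k+1}}f(y^{k+1})+\nabla g(y^{k+1})$, $\|v^{k+1}\|\le\frac{6d_0L^{3/2}}{\mu^{1/2}\sigma_u^{3/2}}\Big(1+\sigma\sqrt{1+\frac{\sigma_u\mu}{L}}\Big)\rho^{(k-1)/2}$, and $\varepsilon_{k+1}\le\frac{3\sigma^2d_0^2L^2}{\sigma_u^2\mu}\rho^{k-1}$.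
   Context: $\mathcal H$ is a finite-dimensional real inner product space with norm $\|\cdot\|$. $f,g:\mathcal H\to(-\infty,\infty]$ are proper, closed, convex, $h:=f+g$ has nonempty domain; $g$ is $\mu$-strongly convex ($\mu>0$). $\Omega\subseteq\mathcal H$ is a nonempty closed convex set containing $\mathrm{dom}\,f$, $P_\Omega$ is the orthogonal projection onto $\Omega$, and $g$ is differentiable on an open set containing $\Omega$ with $\|\nabla g(x)-\nabla g(y)\|\le L\|x-y\|$ for $x,y\in\Omega$, $L>0$. For $\varepsilon\ge0$, $\partial_\varepsilon f(y):=\{u: f(w)\ge f(y)+\langle u,w-y\rangle-\varepsilon\ \forall w\}$. Definition: for $\hat\sigma\ge0$, $(y,u,\varepsilon)\in\mathcal H\times\mathcal H\times[0,\infty)$ is a $\hat\sigma$-approximate PG solution at $(x,\lambda)\in\mathcal H\times(0,\infty)$ if, with $z:=P_\Omega(x)$, $u\in\partial_\varepsilon f(y)$ and $\frac{\|\lambda(u+\nabla g(z))+y-x\|^2}{1+\lambda\mu}+2\lambda\varepsilon\le\hat\sigma^2\|y-x\|^2$. Algorithm 4: Choose $x^0,y^0\in\mathcal H$, $\hat\sigma\ge0$, $0<\sigma_u\le1$ with $\sigma_u+\hat\sigma<1$; let $\lambda:=\frac{\sigma_u}{\sqrt{(\sigma_u\mu/2)^2+L^2}-\sigma_u\mu/2}$ and $A_0=0$. For $k=0,1,\dots$: set $a_{k+1}=\frac{(1+2\mu A_k)\lambda+\sqrt{(1+2\mu A_k)^2\lambda^2+4(1+\mu A_k)A_k\lambda}}{2}$,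 $\tilde x^k=\frac{a_{k+1}-\mu A_k\lambda}{A_k+a_{k+1}}x^k+\frac{A_k+\mu A_k\lambda}{A_k+a_{k+1}}y^k$, compute a $\hat\sigma$-approximate PG solution $(y^{k+1},u^{k+1},\varepsilon_{k+1})$ at $(\tilde x^k,\lambda)$, then set $A_{k+1}=A_k+a_{k+1}$, $v^{k+1}=u^{k+1}+\nabla g(y^{k+1})$, $x^{k+1}=\frac{1+\mu A_k}{1+\mu A_{k+1}}x^k+\frac{\mu a_{k+1}}{1+\mu A_{k+1}}y^{k+1}-\frac{a_{k+1}}{1+\mu A_{k+1}}v^{k+1}$. ''Sequences generated by Algorithm 4'' means any sequences satisfying these relations for all $k\ge0$. *)

(* H = 'rV[R]_n with the standard Euclidean inner product. *)
From HB Require Import structures.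
From mathcomp Require Import all_boot all_order all_algebra.
From mathcomp Require Import all_classical all_reals all_analysis.
Set Implicit Arguments. Unset Strict Implicit. Unset Printing Implicit Defensive.
Import Order.TTheory GRing.Theory Num.Theory.
Local Open Scope ring_scope.

Section Defs.
Context {R : realType} {n : nat}.
Local Notation V := 'rV[R]_n.

Definition ip (u v : V) : R := \sum_(i < n) u ord0 i * v ord0 i.
Definition nrm (u : V) : R := Num.sqrt (ip u u).

Definition proper_fn (f : V -> \bar R) : Prop :=
  (forall x, f x != -oo%E) /\ (exists x, (f x < +oo)%E).

Definition convex_fn (f : V -> \bar R) : Prop :=
  forall x y (t : R), 0 <= t <= 1 ->
    (f (t *: x + (1 - t) *: y)%R <= t%:E * f x + (1 - t)%:E * f y)%E.

(* closed = lower semicontinuous *)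
Definition lsc_fn (f : V -> \bar R) : Prop :=
  forall x (a : R), (a%:E < f x)%E ->
    exists2 d : R, 0 < d & forall y, nrm (y - x) < d -> (a%:E < f y)%E.

Definition dom (f : V -> \bar R) : set V := [set x | (f x < +oo)%E].

Definition strongly_convex_fn (mu : R) (g : V -> \bar R) : Prop :=
  forall x y (t : R), x \in dom g -> y \in dom g -> 0 <= t <= 1 ->
    (g (t *: x + (1 - t) *: y)%R <=
       t%:E * g x + (1 - t)%:E * g y - (mu / 2 * t * (1 - t) * nrm (x - y) ^+ 2)%:E)%E.

Definition closed_set (O : set V) : Prop :=
  forall x, (forall e : R, 0 < e -> exists2 y, O y & nrm (y - x) < e) -> O x.

Definition open_set (U : set V) : Prop :=
  forall x, U x -> exists2 r : R, 0 < r & forall y, nrm (y - x) < r -> U y.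

Definition cvx_set (O : set V) : Prop :=
  forall x y (t : R), O x -> O y -> 0 <= t <= 1 -> O (t *: x + (1 - t) *: y).

Definition is_proj (O : set V) (x z : V) : Prop :=
  O z /\ forall w, O w -> nrm (x - z) <= nrm (x - w).

Definition has_gradient (g : V -> \bar R) (x d : V) : Prop :=
  (exists2 r : R, 0 < r & forall y, nrm (y - x) < r -> g y \is a fin_num) /\
  forall e : R, 0 < e -> exists2 dl : R, 0 < dl & forall h, nrm h < dl ->
    `| fine (g (x + h)%R) - fine (g x) - ip d h | <= e * nrm h.

Definition eps_subdiff (f : V -> \bar R) (eps : R) (y u : V) : Prop :=
  forall w, (f y + (ip u (w - y))%:E - eps%:E <= f w)%E.

(* sigma-approximate PG solution (y,u,eps) at (x,lam);
   P = projection onto Omega, G = gradient of g *)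
Definition approx_PG (f : V -> \bar R) (G P : V -> V) (mu sig : R)
    (x : V) (lam : R) (y u : V) (eps : R) : Prop :=
  0 <= eps /\ eps_subdiff f eps y u /\
  nrm (lam *: (u + G (P x)) + y - x) ^+ 2 / (1 + lam * mu) + 2 * lam * eps
    <= sig ^+ 2 * nrm (y - x) ^+ 2.

End Defs.

From HB Require Import structures.
From mathcomp Require Import all_boot all_order all_algebra.
From mathcomp Require Import all_classical all_reals all_analysis.
From mathcomp Require Import ring lra.
Import Order.TTheory GRing.Theory Num.Theory.
Local Open Scope classical_set_scope.
Local Open Scope ring_scope.

(* The proof is a potential-function argument.  With h* = h(x* ) and
     Phi_k = A_k (h(y^k) - h* ) + (1 + mu A_k) / 2 |x* - x^k|^2,
   one step of the method does not increase Phi (potential_nonincreasing), so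
   Phi_k <= Phi_0 = d0^2 / 2.  The weights satisfy A_1 = lambda >= sigu / L and
   A_k <= rho A_{k+1}, hence A_{k+1} >= (sigu / L) rho^{-k}; since Phi_k
   controls A_k (h(y^k) - h* ), mu A_k |x* - y^k|^2 (quadratic growth) and
   mu A_k |x* - x^k|^2, all three decay like rho^k, which gives (a).  Part (b)
   follows from (a) and the relative error criterion, which (by the choice of
   lambda) still holds with tolerance sigma = sighat + sigu once grad g(P x)
   is replaced by grad g(y). *)

Set Implicit Arguments.
Unset Strict Implicit.
Unset Printing Implicit Defensive.

Section Euclid.
Variables (R : realType) (n : nat).
Local Notation V := 'rV[R]_n.
Implicit Types (u v w : V) (c : R).

Lemma ipC u v : ip u v = ip v u.
Proof. by apply: eq_bigr => i _; rewrite mulrC. Qed.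

Lemma ipDl u w v : ip (u + w) v = ip u v + ip w v.
Proof. by rewrite /ip -big_split; apply: eq_bigr => i _; rewrite mxE mulrDl. Qed.

Lemma ipDr u w v : ip v (u + w) = ip v u + ip v w.
Proof. by rewrite ipC ipDl !(ipC v). Qed.

Lemma ipZl c u v : ip (c *: u) v = c * ip u v.
Proof. by rewrite /ip mulr_sumr; apply: eq_bigr => i _; rewrite mxE mulrA. Qed.

Lemma ipZr c u v : ip v (c *: u) = c * ip v u.
Proof. by rewrite ipC ipZl ipC. Qed.

Lemma ipNl u v : ip (- u) v = - ip u v.
Proof. by rewrite -scaleN1r ipZl mulN1r. Qed.

Lemma ipNr u v : ip v (- u) = - ip v u.
Proof. by rewrite ipC ipNl ipC. Qed.

Definition ipE := (ipDl, ipDr, ipNl, ipNr, ipZl, ipZr).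

Lemma ip_ge0 u : 0 <= ip u u.
Proof. by apply: sumr_ge0 => i _; rewrite -expr2 sqr_ge0. Qed.

Lemma nrm_ge0 u : 0 <= nrm u.
Proof. exact: sqrtr_ge0. Qed.

Lemma nrm2 u : nrm u ^+ 2 = ip u u.
Proof. by rewrite sqr_sqrtr // ip_ge0. Qed.

Lemma nrm0 : nrm (0 : V) = 0.
Proof. by rewrite /nrm -(scale0r 0) ipZl mul0r sqrtr0. Qed.

Lemma nrmZ c u : nrm (c *: u) = `|c| * nrm u.
Proof. by rewrite /nrm ipZl ipZr mulrA -expr2 sqrtrM ?sqr_ge0 // sqrtr_sqr. Qed.

Lemma nrmN u : nrm (- u) = nrm u.
Proof. by rewrite /nrm ipNl ipNr opprK. Qed.

Lemma nrmB u v : nrm (u - v) = nrm (v - u).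
Proof. by rewrite -nrmN opprB. Qed.

Lemma nonneg_quadratic_discr (p q r : R) : 0 <= q ->
  (forall t, 0 <= p - 2 * t * r + t ^+ 2 * q) -> r ^+ 2 <= p * q.
Proof.
move=> hq hquad.
have [q0|q0] := eqVneq q 0.
  have [r0|r0] := eqVneq r 0; first by rewrite r0 q0 expr0n mulr0.
  have := hquad ((p + 1) / (2 * r)).
  have -> : 2 * ((p + 1) / (2 * r)) * r = p + 1 by field.
  by rewrite q0 mulr0 addr0; lra.
have {}hq : 0 < q by rewrite lt_neqAle eq_sym q0.
have := hquad (r / q).
have -> : p - 2 * (r / q) * r + (r / q) ^+ 2 * q = (p * q - r ^+ 2) / q.
  by field; rewrite gt_eqF.
by rewrite pmulr_lge0 ?invr_gt0 // subr_ge0.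
Qed.

Lemma cauchy_schwarz u v : ip u v <= nrm u * nrm v.
Proof.
have hsq : ip u v ^+ 2 <= ip u u * ip v v.
  apply: nonneg_quadratic_discr => [|t]; first exact: ip_ge0.
  have := ip_ge0 (u - t *: v); rewrite !ipE (ipC v u); lra.
rewrite /nrm -sqrtrM ?ip_ge0 // (le_trans (ler_norm _)) //.
by rewrite -sqrtr_sqr ler_sqrt // mulr_ge0 ?ip_ge0.
Qed.

Lemma nrmD u v : nrm (u + v) <= nrm u + nrm v.
Proof.
have h1 := nrm_ge0 u; have h2 := nrm_ge0 v.
rewrite -ler_sqr ?nnegrE ?addr_ge0 ?nrm_ge0 // sqrrD !nrm2 !ipE (ipC v u).
have := cauchy_schwarz u v; lra.
Qed.

Lemma nrm_comb c u v : nrm (c *: u + (1 - c) *: v) <= `|c| * nrm u + `|1 - c| * nrm v.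
Proof. by rewrite -!nrmZ nrmD. Qed.

End Euclid.

Lemma le_up_to_eps (R : realFieldType) (X Y C : R) : 0 <= C ->
  (forall e : R, 0 < e -> Y <= X + e * C) -> Y <= X.
Proof.
move=> hC hY; apply/ler_addgt0Pr => e he.
have hC1 : 0 < C + 1 by lra.
apply: le_trans (hY (e / (C + 1)) _) _; first by rewrite divr_gt0.
rewrite lerD2l mulrAC ler_pdivrMr // ler_wpM2l ?ltW //; lra.
Qed.

(* The same principle, with the error term controlled by a parameter t in (0,1]:
   this is how first-order conditions are extracted from convexity. *)
Lemma le_up_to_small_t (R : realFieldType) (X Y C : R) : 0 <= C ->
  (forall t : R, 0 < t <= 1 -> Y <= X + t * C) -> Y <= X.
Proof.
move=> hC hY; apply: (le_up_to_eps hC) => e he.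
have he1 : 0 < 1 + e by lra.
have ht : 0 < e / (1 + e) <= 1.
  by rewrite divr_gt0 //= ler_pdivrMr // mul1r; lra.
apply: le_trans (hY _ ht) _; rewrite lerD2l ler_wpM2r //.
by rewrite ler_pdivrMr // ler_peMr ?ltW //; lra.
Qed.

Section ConvexAnalysis.
Variables (R : realType) (n : nat).
Local Notation V := 'rV[R]_n.

Lemma lincomb_eq (t : R) (w z : V) : t *: w + (1 - t) *: z = z + t *: (w - z).
Proof. by apply/rowP => i; rewrite !mxE; ring. Qed.

Lemma proj_variational (O : set V) (x z w : V) :
  cvx_set O -> is_proj O x z -> O w -> ip (x - z) (w - z) <= 0.
Proof.
move=> hcvx [hz hmin] hw.
apply: (le_up_to_small_t (C := ip (w - z) (w - z) / 2)).
  by rewrite divr_ge0 ?ip_ge0.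
move=> t /andP[ht0 ht1].
have := hmin _ (hcvx w z t hw hz (introT andP (conj (ltW ht0) ht1))).
rewrite -ler_sqr ?nnegrE ?nrm_ge0 // !nrm2 lincomb_eq.
have -> : x - (z + t *: (w - z)) = (x - z) - t *: (w - z).
  by apply/rowP => i; rewrite !mxE; ring.
move: (x - z) (w - z) => p q; rewrite !ipE (ipC q p) => h.
have : t * (ip p q - t * ip q q / 2) <= 0 by lra.
by rewrite pmulr_rle0 //; lra.
Qed.

Lemma proj_closer (O : set V) (x z w : V) :
  cvx_set O -> is_proj O x z -> O w -> nrm (w - z) <= nrm (w - x).
Proof.
move=> hcvx hproj hw; have hvar := proj_variational hcvx hproj hw.
rewrite -ler_sqr ?nnegrE ?nrm_ge0 // !nrm2.
have -> : w - x = (w - z) - (x - z) by apply/rowP => i; rewrite !mxE; ring.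
move: hvar; move: (x - z) (w - z) => p q hvar.
have := ip_ge0 p; rewrite !ipE (ipC q p); lra.
Qed.

Lemma convex_strongly_convex0 (f : V -> \bar R) :
  convex_fn f -> strongly_convex_fn 0 f.
Proof.
move=> hf x y t _ _ ht; rewrite !(mul0r, mulr0) sube0; exact: hf.
Qed.

Lemma strongly_convex_segment (g : V -> \bar R) (mu : R) (z w : V) (gz gw t : R) :
  (forall x, g x != -oo%E) -> strongly_convex_fn mu g ->
  g z = gz%:E -> g w = gw%:E -> 0 <= t <= 1 ->
  exists2 gt : R, g (z + t *: (w - z)) = gt%:E &
    gt <= t * gw + (1 - t) * gz - mu / 2 * t * (1 - t) * nrm (w - z) ^+ 2.
Proof.
move=> hnotmoo hsc hz hw ht.
have hzd : z \in dom g by rewrite in_setE /dom /= hz ltry.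
have hwd : w \in dom g by rewrite in_setE /dom /= hw ltry.
have := hsc w z t hwd hzd ht; rewrite lincomb_eq hz hw.
have -> : (t%:E * gw%:E + (1 - t)%:E * gz%:E
           - (mu / 2 * t * (1 - t) * nrm (w - z) ^+ 2)%:E)%E
        = (t * gw + (1 - t) * gz - mu / 2 * t * (1 - t) * nrm (w - z) ^+ 2)%:E.
  by rewrite EFinB EFinD !EFinM.
case: (g _) (hnotmoo (z + t *: (w - z))) => [gt| |] // _.
by rewrite lee_fin => hgt; exists gt.
Qed.

Lemma strongly_convex_gradient_ineq (g : V -> \bar R) (mu : R) (z d : V) :
  0 <= mu -> (forall x, g x != -oo%E) -> strongly_convex_fn mu g ->
  has_gradient g z d ->
  forall w, (g z + (ip d (w - z) + mu / 2 * nrm (w - z) ^+ 2)%:E <= g w)%E.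
Proof.
move=> hmu hnotmoo hsc [[r hr hfin] hdiff] w.
have hz : g z = (fine (g z))%:E by rewrite fineK // hfin // subrr nrm0.
set gz := fine (g z) in hz *.
case Ew: (g w) => [gw| |]; [|by rewrite leey|by move: (hnotmoo w); rewrite Ew].
rewrite hz -EFinD lee_fin.
set N := nrm (w - z); have hN : 0 <= N := nrm_ge0 _.
apply: (le_up_to_eps (C := N + mu / 2 * N ^+ 2)); first by nra.
move=> e he; have [dl hdl hdl_diff] := hdiff e he.
(* a step t small enough for both the tolerance e and the radius dl *)
have hden : 0 < (1 + e) * (dl + N) by rewrite mulr_gt0 //; lra.
set t := e * dl / ((1 + e) * (dl + N)).
have ht0 : 0 < t by rewrite divr_gt0 // mulr_gt0.
have hte : t <= e by rewrite ler_pdivrMr //; nra.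
have ht1 : t <= 1 by rewrite ler_pdivrMr // mul1r; nra.
have htN : t * N < dl by rewrite mulrAC ltr_pdivrMr //; nra.
have [gt hgt hchord] :=
  strongly_convex_segment hnotmoo hsc hz Ew (introT andP (conj (ltW ht0) ht1)).
have := hdl_diff (t *: (w - z)).
rewrite nrmZ (ger0_norm (ltW ht0)) -/N => /(_ htN).
rewrite hgt hz /= ipZr => /ler_normlP [hlin _].
have key : t * (gz + ip d (w - z) + mu / 2 * N ^+ 2 - gw - e * N - mu / 2 * t * N ^+ 2) <= 0.
  by rewrite -/N in hchord; lra.
have {key} : gz + ip d (w - z) + mu / 2 * N ^+ 2 - gw - e * N - mu / 2 * t * N ^+ 2 <= 0.
  by move: key; rewrite pmulr_rle0.
have : mu / 2 * t * N ^+ 2 <= mu / 2 * e * N ^+ 2 by rewrite ler_wpM2r ?sqr_ge0 // ler_wpM2l ?divr_ge0.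
lra.
Qed.

Lemma minimizer_quadratic_growth (f g : V -> \bar R) (mu : R) (y xs : V)
    (fy gy fx gx : R) :
  0 <= mu -> (forall x, f x != -oo%E) -> (forall x, g x != -oo%E) ->
  convex_fn f -> strongly_convex_fn mu g ->
  f y = fy%:E -> g y = gy%:E -> f xs = fx%:E -> g xs = gx%:E ->
  (forall w, (f xs + g xs <= f w + g w)%E) ->
  mu / 2 * nrm (y - xs) ^+ 2 <= fy + gy - (fx + gx).
Proof.
move=> hmu hfnotmoo hgnotmoo hfc hgsc hfy hgy hfx hgx hmin.
set N := nrm (y - xs).
apply: (le_up_to_small_t (C := mu / 2 * N ^+ 2)); first by nra.
move=> t /andP[ht0 ht1]; have ht : 0 <= t <= 1 by rewrite ht1 ltW.
have [ft hft hfchord] :=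
  strongly_convex_segment hfnotmoo (convex_strongly_convex0 hfc) hfx hfy ht.
have [gt hgt hgchord] := strongly_convex_segment hgnotmoo hgsc hgx hgy ht.
have := hmin (xs + t *: (y - xs)); rewrite hft hgt hfx hgx -!EFinD lee_fin.
rewrite -/N in hgchord => hopt.
have : t * (mu / 2 * N ^+ 2 - (fy + gy - (fx + gx)) - t * (mu / 2 * N ^+ 2)) <= 0.
  by lra.
by rewrite pmulr_rle0 //; lra.
Qed.

End ConvexAnalysis.

Lemma sqrtr_le1 (R : rcfType) (x : R) : x <= 1 -> Num.sqrt x <= 1.
Proof. by move=> hx; rewrite -sqrtr1 ler_sqrt. Qed.

Lemma sqrtr_lt1 (R : rcfType) (x : R) : x < 1 -> Num.sqrt x < 1.
Proof. by move=> hx; rewrite -sqrtr1 ltr_sqrt. Qed.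

Lemma sqrtr_ge1 (R : rcfType) (x : R) : 1 <= x -> 1 <= Num.sqrt x.
Proof. by move=> hx; rewrite -sqrtr1 ler_sqrt // (le_trans ler01). Qed.

Lemma le_sqrt_of_sqr (R : rcfType) (N E : R) : 0 <= N -> N ^+ 2 <= E -> N <= Num.sqrt E.
Proof.
move=> hN hE; rewrite -(ger0_norm hN) -sqrtr_sqr ler_sqrt //.
exact: le_trans (sqr_ge0 _) hE.
Qed.

Lemma powR_half (R : realType) (x : R) (m : nat) : 0 <= x ->
  x `^ (m%:R / 2) = Num.sqrt (x ^+ m).
Proof. by move=> hx; rewrite powRrM powR_mulrn // powR12_sqrt // exprn_ge0. Qed.

Lemma sqrt_scaled (R : rcfType) (a b c : R) : 0 <= a -> 0 <= b -> 0 <= c ->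
  Num.sqrt (a * b ^+ 2 * c) = Num.sqrt a * b * Num.sqrt c.
Proof.
by move=> ha hb hc; rewrite sqrtrM ?mulr_ge0 ?sqr_ge0 // sqrtrM // sqrtr_sqr ger0_norm.
Qed.

Lemma sqrt_cube (R : rcfType) (x : R) : 0 <= x -> Num.sqrt (x ^+ 3) = x * Num.sqrt x.
Proof.
by move=> hx; rewrite exprSr sqrtrM ?sqr_ge0 // sqrtr_sqr ger0_norm.
Qed.

(* A nonnegative X with X^2 <= s^2 + s X lies below the positive root
   s (1 + sqrt 5) / 2 of this quadratic, hence below 2 s. *)
Lemma quadratic_root_bound (R : realFieldType) (s X : R) :
  0 < s -> 0 <= X -> X ^+ 2 <= s ^+ 2 + s * X -> X <= 2 * s.
Proof. by move=> *; nra. Qed.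

(* The stepsize lambda of Algorithm 4, the contraction factor rho of the
   theorem, and the quadratic equation that determines the weights a_{k+1}. *)
Definition stepsize (R : rcfType) (sigu mu L : R) : R :=
  sigu / (Num.sqrt ((sigu * mu / 2) ^+ 2 + L ^+ 2) - sigu * mu / 2).

Definition rate (R : rcfType) (sigu mu L : R) : R :=
  1 - Num.sqrt (sigu / (1 + sigu)) * Num.sqrt (mu / L).

Definition weight_eq (R : rcfType) (lam mu A a : R) : Prop :=
  a ^+ 2 = lam * ((1 + mu * A) * (A + a) + mu * A * a).

Section Stepsize.
Variables (R : rcfType) (sigu mu L : R).
Hypotheses (hsu0 : 0 < sigu) (hmu : 0 < mu) (hmuL : mu <= L).
Local Notation lam := (stepsize sigu mu L).

Let hL : 0 < L. Proof. exact: lt_le_trans hmuL. Qed.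

Let c := sigu * mu / 2.
Let S := Num.sqrt (c ^+ 2 + L ^+ 2).

Let hc : 0 < c. Proof. by rewrite divr_gt0 // mulr_gt0. Qed.

Let hS2 : S ^+ 2 = c ^+ 2 + L ^+ 2.
Proof. by rewrite sqr_sqrtr // addr_ge0 ?sqr_ge0. Qed.

Let hSc : 0 < S - c.
Proof.
rewrite subr_gt0 -(ger0_norm (ltW hc)) -sqrtr_sqr ltr_sqrt ?ltrDl ?exprn_gt0 //.
by rewrite ltr_wpDl ?sqr_ge0 // exprn_gt0.
Qed.

Lemma stepsize_gt0 : 0 < lam.
Proof. by rewrite divr_gt0. Qed.

Let hlam : 0 < lam := stepsize_gt0.

(* lambda is the positive root of (lambda L)^2 = sigu^2 (1 + lambda mu):
   this is what makes the relative error criterion robust to replacing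
   grad g(P x) by grad g(y). *)
Lemma stepsize_eq : lam * L = sigu * Num.sqrt (1 + lam * mu).
Proof.
have elam : lam = sigu / (S - c) by [].
have hsq : 1 + lam * mu = (lam * L / sigu) ^+ 2.
  have -> : (lam * L / sigu) ^+ 2 = L ^+ 2 / (S - c) ^+ 2.
    by rewrite elam; field; rewrite (gt_eqF hSc) (gt_eqF hsu0).
  have -> : L ^+ 2 = S ^+ 2 - c ^+ 2 by rewrite hS2; ring.
  have esm : sigu * mu = 2 * c by rewrite /c; field.
  have -> : lam * mu = 2 * c / (S - c) by rewrite elam mulrAC esm.
  by field; rewrite (gt_eqF hSc).
rewrite hsq sqrtr_sqr ger0_norm; first by field; rewrite (gt_eqF hsu0).
by apply: divr_ge0; [apply: mulr_ge0|]; apply: ltW.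
Qed.

Lemma stepsize_lower : sigu <= lam * L.
Proof.
rewrite stepsize_eq ler_peMr ?(ltW hsu0) // sqrtr_ge1 // lerDl.
by apply: mulr_ge0; apply: ltW.
Qed.

Lemma stepsize_upper : sigu <= 1 -> lam * L <= 2 * sigu.
Proof.
move=> hsu1.
have hX2 : (lam * L) ^+ 2 = sigu ^+ 2 * (1 + lam * mu).
  by rewrite stepsize_eq exprMn sqr_sqrtr // addr_ge0 // mulr_ge0 ?ltW.
have h1 : lam * mu * sigu <= lam * L.
  by rewrite -mulrA ler_pM2l // (le_trans _ hmuL) // ger_pMr.
have h2 : 0 <= lam * L by apply: mulr_ge0; apply: ltW.
have h3 : (lam * L) ^+ 2 <= sigu ^+ 2 + sigu * (lam * L).
  rewrite hX2; have := ler_wpM2l (ltW hsu0) h1; lra.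
exact: quadratic_root_bound hsu0 h2 h3.
Qed.

End Stepsize.

Lemma rate_gt0 (R : rcfType) (sigu mu L : R) :
  0 < sigu -> 0 < mu -> mu <= L -> 0 < rate sigu mu L.
Proof.
move=> hsu hmu hmuL; have hL : 0 < L := lt_le_trans hmu hmuL.
have hs1 : 0 < 1 + sigu by lra.
have h1 : Num.sqrt (sigu / (1 + sigu)) < 1.
  by rewrite sqrtr_lt1 // ltr_pdivrMr // mul1r ltrDr.
have h2 : Num.sqrt (mu / L) <= 1.
  by rewrite sqrtr_le1 // ler_pdivrMr // mul1r.
rewrite subr_gt0; have := sqrtr_ge0 (sigu / (1 + sigu)); have := sqrtr_ge0 (mu / L).
nra.
Qed.

Lemma rate_le1 (R : rcfType) (sigu mu L : R) : rate sigu mu L <= 1.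
Proof. by rewrite /rate lerBlDr lerDl mulr_ge0 ?sqrtr_ge0. Qed.

Section Weights.
Variables (R : rcfType) (lam mu : R).
Hypotheses (hlam : 0 < lam) (hmu : 0 < mu).

Lemma weight_root (A a : R) : 0 <= A ->
  a = ((1 + 2 * mu * A) * lam
       + Num.sqrt ((1 + 2 * mu * A) ^+ 2 * lam ^+ 2 + 4 * (1 + mu * A) * A * lam)) / 2 ->
  0 < a /\ weight_eq lam mu A a.
Proof.
move=> hA ->.
set B := (1 + 2 * mu * A) * lam; set C := (1 + mu * A) * A * lam.
have hmuA : 0 <= mu * A := mulr_ge0 (ltW hmu) hA.
have hB : 0 < B by rewrite /B mulr_gt0 //; lra.
have hC : 0 <= C by rewrite /C; apply: mulr_ge0; [apply: mulr_ge0|apply: ltW] => //; lra.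
have -> : (1 + 2 * mu * A) ^+ 2 * lam ^+ 2 + 4 * (1 + mu * A) * A * lam = B ^+ 2 + 4 * C.
  by rewrite /B /C; ring.
set s := Num.sqrt (B ^+ 2 + 4 * C); have hs : 0 <= s := sqrtr_ge0 _.
have hs2 : s ^+ 2 = B ^+ 2 + 4 * C.
  by rewrite sqr_sqrtr // addr_ge0 ?sqr_ge0 // mulr_ge0.
split; first by rewrite divr_gt0 // ltr_wpDr.
rewrite /weight_eq /B /C in hs2 *; nra.
Qed.

(* The extrapolation weight of x^k in tilde x^k lies in [0, 1]. *)
Lemma extrapolation_weight_bounds (A a : R) : 0 <= A -> 0 < a ->
  weight_eq lam mu A a -> 0 <= (a - mu * A * lam) / (A + a) <= 1.
Proof.
move=> hA ha heq; have hAa : 0 < A + a by rewrite ltr_wpDl.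
have hmuA : 0 <= mu * A := mulr_ge0 (ltW hmu) hA.
have hmAl : 0 <= mu * A * lam := mulr_ge0 hmuA (ltW hlam).
apply/andP; split; last by rewrite ler_pdivrMr // mul1r; lra.
apply: divr_ge0; last exact: ltW.
have e : a * (a - mu * A * lam) = lam * ((1 + mu * A) * (A + a)).
  by rewrite mulrBr -expr2 heq; ring.
have : 0 <= a * (a - mu * A * lam).
  by rewrite e; apply: mulr_ge0; [exact: ltW | apply: mulr_ge0; lra].
by rewrite pmulr_rge0.
Qed.

Lemma weight_growth (sigu L A a : R) : 0 < sigu -> mu <= L -> sigu <= lam * L ->
  0 <= A -> 0 < a -> weight_eq lam mu A a -> A <= rate sigu mu L * (A + a).
Proof.
move=> hsu hmuL hlow hA ha heq; have hL : 0 < L := lt_le_trans hmu hmuL.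
set q := Num.sqrt (sigu / (1 + sigu)) * Num.sqrt (mu / L).
have hs1 : 0 < 1 + sigu by lra.
have hq : 0 <= q by rewrite mulr_ge0 ?sqrtr_ge0.
have hq2 : q ^+ 2 = sigu / (1 + sigu) * (mu / L).
  by rewrite exprMn !sqr_sqrtr //; apply: divr_ge0; apply: ltW.
have hqlam : q ^+ 2 * (1 + lam * mu) <= lam * mu.
  rewrite hq2 -(ler_pM2r (mulr_gt0 hs1 hL)).
  have -> : sigu / (1 + sigu) * (mu / L) * (1 + lam * mu) * ((1 + sigu) * L)
          = mu * (sigu + sigu * (lam * mu)) by field; rewrite !gt_eqF.
  have -> : lam * mu * ((1 + sigu) * L) = mu * (lam * L + sigu * (lam * L)) by ring.
  by rewrite ler_pM2l // lerD // ler_pM2l // ler_pM2l.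
have e1 : a ^+ 2 * (1 + lam * mu) = lam * (A + a) + lam * mu * (A + a) ^+ 2.
  by rewrite mulrDr mulr1 [in X in X + _]heq; ring.
have hsq : (q * (A + a)) ^+ 2 <= a ^+ 2.
  have hlm : 0 < 1 + lam * mu by have := mulr_gt0 hlam hmu; lra.
  rewrite -(ler_pM2r hlm) e1 exprMn.
  have : q ^+ 2 * (1 + lam * mu) * (A + a) ^+ 2 <= lam * mu * (A + a) ^+ 2.
    by rewrite ler_wpM2r ?sqr_ge0.
  have := mulr_ge0 (ltW hlam) (addr_ge0 hA (ltW ha)).
  lra.
have : q * (A + a) <= a.
  by rewrite -ler_sqr ?nnegrE ?(ltW ha) // mulr_ge0 //; lra.
by rewrite /rate -/q; lra.
Qed.

End Weights.

Section WeightSequence.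
Variables (R : rcfType) (lam mu : R) (A a : nat -> R).
Hypotheses (hlam : 0 < lam) (hmu : 0 < mu) (hA0 : A 0 = 0).
Hypothesis ha : forall k, a k.+1 = ((1 + 2 * mu * A k) * lam
  + Num.sqrt ((1 + 2 * mu * A k) ^+ 2 * lam ^+ 2 + 4 * (1 + mu * A k) * A k * lam)) / 2.
Hypothesis hA : forall k, A k.+1 = A k + a k.+1.

Lemma weights_spec k : [/\ 0 <= A k, 0 < a k.+1 & weight_eq lam mu (A k) (a k.+1)].
Proof.
have step j : 0 <= A j -> [/\ 0 <= A j, 0 < a j.+1 & weight_eq lam mu (A j) (a j.+1)].
  by move=> hAj; have [? ?] := weight_root hlam hmu hAj (ha j).
elim: k => [|k [hAk hak _]]; apply: step; first by rewrite hA0.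
by rewrite hA addr_ge0 // ltW.
Qed.

Lemma weight_first : A 1 = lam.
Proof.
rewrite hA hA0 add0r ha hA0 !(mulr0, mul0r, addr0, mul1r, expr1n).
by rewrite sqrtr_sqr ger0_norm ?ltW //; field.
Qed.

Lemma weights_geometric (sigu L : R) : 0 < sigu -> mu <= L -> sigu <= lam * L ->
  forall k, sigu / L <= rate sigu mu L ^+ k * A k.+1.
Proof.
move=> hsu hmuL hlow; have hL : 0 < L := lt_le_trans hmu hmuL.
elim=> [|k IH]; first by rewrite expr0 mul1r weight_first ler_pdivrMr // mulrC.
apply: le_trans IH _; rewrite exprS -mulrA mulrCA ler_wpM2l //.
  by rewrite exprn_ge0 // ltW // rate_gt0.
have [hAk hak heq] := weights_spec k.+1.
by rewrite [A k.+2]hA; exact: (weight_growth hlam hmu hsu hmuL hlow hAk hak heq).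
Qed.

End WeightSequence.

Section OneStep.
Variables (R : realType) (n : nat).
Local Notation V := 'rV[R]_n.

Lemma relative_error_transfer (lam mu L sh su eps : R) (w gz gy y x : V) :
  0 < lam -> 0 < mu -> 0 <= sh -> 0 <= su -> 0 <= eps ->
  lam * L = su * Num.sqrt (1 + lam * mu) ->
  nrm (gy - gz) <= L * nrm (y - x) ->
  nrm (lam *: (w + gz) + y - x) ^+ 2 / (1 + lam * mu) + 2 * lam * eps
    <= sh ^+ 2 * nrm (y - x) ^+ 2 ->
  nrm (lam *: (w + gy) + y - x) ^+ 2 / (1 + lam * mu) + 2 * lam * eps
    <= (sh + su) ^+ 2 * nrm (y - x) ^+ 2.
Proof.
move=> hlam hmu hsh hsu heps hlL hlip herr.
have hlm : 0 < 1 + lam * mu by have := mulr_gt0 hlam hmu; lra.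
set c := Num.sqrt (1 + lam * mu).
have hc : 0 < c by rewrite sqrtr_gt0.
have hc2 : c ^+ 2 = 1 + lam * mu by rewrite sqr_sqrtr // ltW.
set p := nrm (lam *: (w + gz) + y - x) in herr *.
set p' := nrm (lam *: (w + gy) + y - x).
set r := nrm (y - x) in hlip herr *.
have hp : 0 <= p := nrm_ge0 _; have hp' : 0 <= p' := nrm_ge0 _.
have hr : 0 <= r := nrm_ge0 _.
(* changing the gradient moves the residual by at most lambda L r = su c r *)
have hpp : p' <= p + su * c * r.
  rewrite /p'; have -> : lam *: (w + gy) + y - x = (lam *: (w + gz) + y - x) + lam *: (gy - gz).
    by apply/rowP => i; rewrite !mxE; ring.
  apply: le_trans (nrmD _ _) _; rewrite lerD2l nrmZ (ger0_norm (ltW hlam)).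
  by rewrite -[su * c]hlL -mulrA ler_pM2l.
rewrite -hc2 -!expr_div_n in herr *.
have hP : 0 <= p / c := divr_ge0 hp (ltW hc).
have hPs : p / c <= sh * r.
  rewrite -ler_sqr ?nnegrE ?divr_ge0 ?mulr_ge0 ?(ltW hc) // exprMn.
  have : 0 <= 2 * lam * eps by rewrite mulr_ge0 // mulr_ge0 // ltW.
  lra.
have hPs' : p' / c <= p / c + su * r.
  by rewrite ler_pdivrMr // mulrDl divfK ?gt_eqF // mulrAC.
have hP' : 0 <= p' / c := divr_ge0 hp' (ltW hc).
have hsur : 0 <= su * r := mulr_ge0 hsu hr.
have hPsur : 0 <= p / c + su * r := addr_ge0 hP hsur.
have hsq : (p' / c) ^+ 2 <= (p / c + su * r) ^+ 2 by rewrite ler_sqr ?nnegrE.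
have hx : 0 <= (sh * r - p / c) * (su * r) by rewrite mulr_ge0 // subr_ge0.
nra.
Qed.

(* Write everything relative to the new
   point y := y^{k+1}: P = x^k - y, Q = y^k - y, W = x* - y, Vv = v^{k+1},
   T = tilde x^k - y, H = h(y).  If the relative error criterion holds with
   tolerance s2 = sigma^2, then the new potential plus the error slack is
   bounded by A_k (model at y^k) + a_{k+1} (model at x* ) + the old distance term. *)
Lemma potential_step_ineq (A a lam mu s2 eps H : R) (P Q W Vv : V) :
  0 <= A -> 0 < a -> 0 < mu -> weight_eq lam mu A a ->
  let al := (a - mu * A * lam) / (A + a) in
  let T := al *: P + (1 - al) *: Q in
  nrm (lam *: Vv - T) ^+ 2 / (1 + lam * mu) + 2 * lam * eps <= s2 * nrm T ^+ 2 ->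
  (A + a) * H
  + (1 + mu * (A + a)) / 2 *
      nrm (W - (((1 + mu * A) / (1 + mu * (A + a))) *: P
                - (a / (1 + mu * (A + a))) *: Vv)) ^+ 2
  + (1 - s2) * (A + a) / (2 * lam) * nrm T ^+ 2
  <= A * (H - eps + ip Vv Q + mu / 2 * nrm Q ^+ 2)
     + a * (H - eps + ip Vv W + mu / 2 * nrm W ^+ 2)
     + (1 + mu * A) / 2 * nrm (W - P) ^+ 2.
Proof.
move=> hA ha hmu heq al T herr; rewrite !nrm2 in herr *.
have hmuA : 0 <= mu * A := mulr_ge0 (ltW hmu) hA.
have hAa : 0 < A + a by rewrite ltr_wpDl.
set D := (1 + mu * A) * (A + a) + mu * A * a in heq.
have hD : 0 < D by rewrite /D; have := mulr_ge0 hmuA (ltW ha); nra.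
have hlam : 0 < lam.
  by have := exprn_gt0 2 ha; rewrite heq pmulr_lgt0.
have elam : lam = a ^+ 2 / D by rewrite heq mulfK ?gt_eqF.
have [hal0 hal1] : 0 <= al /\ al <= 1.
  by apply/andP; apply: extrapolation_weight_bounds.
(* B1 is the slack in the error criterion, B2 the convexity gap of |.|^2 *)
set B1 := s2 * ip T T - ip (lam *: Vv - T) (lam *: Vv - T) / (1 + lam * mu)
          - 2 * lam * eps.
have hB1 : 0 <= B1 by rewrite /B1; lra.
set B2 := al * ip P P + (1 - al) * ip Q Q - ip T T.
have hB2 : 0 <= B2.
  have -> : B2 = al * (1 - al) * ip (P - Q) (P - Q).
    by rewrite /B2 /T !ipE (ipC Q P); ring.
  by apply: mulr_ge0; [apply: mulr_ge0|apply: ip_ge0]; lra.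
have key : A * (H - eps + ip Vv Q + mu / 2 * ip Q Q)
     + a * (H - eps + ip Vv W + mu / 2 * ip W W)
     + (1 + mu * A) / 2 * ip (W - P) (W - P)
     - ((A + a) * H
        + (1 + mu * (A + a)) / 2 *
            ip (W - (((1 + mu * A) / (1 + mu * (A + a))) *: P
                     - (a / (1 + mu * (A + a))) *: Vv))
               (W - (((1 + mu * A) / (1 + mu * (A + a))) *: P
                     - (a / (1 + mu * (A + a))) *: Vv))
        + (1 - s2) * (A + a) / (2 * lam) * ip T T)
   = (A + a) / (2 * lam) * B1 + mu * (A + a) / (1 + lam * mu) / 2 * B2.
  rewrite /B1 /B2 /T /al !ipE.
  rewrite ?(ipC Q P) ?(ipC Vv P) ?(ipC W P) ?(ipC Vv Q) ?(ipC W Q) ?(ipC W Vv).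
  rewrite elam /D; field.
  have h4 : 0 < (1 + mu * A) * (A + a) + mu * A * a + a ^+ 2 * mu.
    by rewrite addr_gt0 // mulr_gt0 // exprn_gt0.
  have h5 : 0 < 1 + mu * (A + a) by rewrite ltr_wpDr // mulr_ge0 // ltW.
  by rewrite (gt_eqF hAa) (gt_eqF hD) (gt_eqF h4) (gt_eqF ha) (gt_eqF h5).
rewrite -subr_ge0 key addr_ge0 // mulr_ge0 //.
  by rewrite divr_ge0 ?mulr_ge0 // ltW.
by rewrite divr_ge0 // divr_ge0 ?mulr_ge0 ?ltW // ltr_wpDr // mulr_ge0 // ltW.
Qed.

End OneStep.

(* The constant of part (b), written with real powers as in the paper, in
   terms of the distance bound sqrt (L / (sigu mu) d0^2 r^j). *)
Lemma rate_b_constant (R : realType) (d0 L mu sigu K r : R) (j : nat) :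
  0 <= d0 -> 0 < L -> 0 < mu -> 0 < sigu -> 0 <= r ->
  6 * d0 * L `^ (3 / 2) / (mu `^ (1 / 2) * sigu `^ (3 / 2)) * K * r `^ (j%:R / 2)
  = 6 * K * L * Num.sqrt (L / (sigu * mu) * d0 ^+ 2 * r ^+ j) / sigu.
Proof.
move=> hd0 hL hmu hsu hr.
have hsq : 0 < Num.sqrt sigu by rewrite sqrtr_gt0.
have hmq : 0 < Num.sqrt mu by rewrite sqrtr_gt0.
have -> : mu `^ (1 / 2) = Num.sqrt mu.
  by rewrite -[(1 / 2 : R)]/(1%:R / 2) powR_half ?expr1 // ltW.
rewrite !powR_half ?sqrt_cube ?(ltW hL) ?(ltW hsu) //.
rewrite sqrt_scaled ?exprn_ge0 // ?divr_ge0 ?mulr_ge0 ?(ltW hL) ?(ltW hsu) ?(ltW hmu) //.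
rewrite sqrtrM ?(ltW hL) // sqrtrV ?mulr_ge0 ?(ltW hsu) ?(ltW hmu) //.
rewrite sqrtrM ?(ltW hsu) //.
by field; rewrite ?(gt_eqF hsq) ?(gt_eqF hmq) ?(gt_eqF hsu).
Qed.

Lemma weighted_bound (R : realFieldType) (mu L sigu A N d q : R) :
  0 < mu -> 0 < L -> 0 < sigu -> 0 <= N -> 0 <= q ->
  mu * A * N <= d -> sigu / L <= q * A -> N <= L / (sigu * mu) * d * q.
Proof.
move=> hmu hL hsu hN hq hd hA.
have hc : 0 < sigu * mu / L by rewrite divr_gt0 // mulr_gt0.
rewrite -(ler_pM2l hc).
have -> : sigu * mu / L * (L / (sigu * mu) * d * q) = q * d.
  by field; rewrite !gt_eqF.
have -> : sigu * mu / L * N = mu * (sigu / L * N) by ring.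
apply: le_trans (_ : mu * (q * A * N) <= _).
  by rewrite ler_pM2l // ler_wpM2r.
have -> : mu * (q * A * N) = q * (mu * A * N) by ring.
by rewrite ler_wpM2l.
Qed.

Section Algorithm4.
Variables (R : realType) (n : nat).
Local Notation V := 'rV[R]_n.
Variables (f g : V -> \bar R) (mu L sighat sigu : R) (Omega : set V) (P G : V -> V).
Variables (x y u v xt : nat -> V) (eps A a : nat -> R) (xs : V).
Hypotheses (hfprop : proper_fn f) (hfcvx : convex_fn f) (hgprop : proper_fn g).
Hypothesis hsum_fin : exists z, (f z + g z < +oo)%E.
Hypotheses (hmu : 0 < mu) (hgsc : strongly_convex_fn mu g).
Hypotheses (hOcvx : cvx_set Omega) (hdom : dom f `<=` Omega).
Hypothesis hproj : forall z, is_proj Omega z (P z).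
Hypothesis hgrad : forall z, Omega z -> has_gradient g z (G z).
Hypothesis hlip : forall z w, Omega z -> Omega w -> nrm (G z - G w) <= L * nrm (z - w).
Hypotheses (hmuL : mu <= L) (hsh : 0 <= sighat) (hsu0 : 0 < sigu) (hsu1 : sigu <= 1).
Hypothesis hsig : sigu + sighat < 1.
Local Notation lam := (stepsize sigu mu L).
Hypothesis hA0 : A 0 = 0.
Hypothesis halg : forall k,
  a k.+1 = ((1 + 2 * mu * A k) * lam
            + Num.sqrt ((1 + 2 * mu * A k) ^+ 2 * lam ^+ 2
                        + 4 * (1 + mu * A k) * A k * lam)) / 2 /\
  xt k = ((a k.+1 - mu * A k * lam) / (A k + a k.+1)) *: x k
         + ((A k + mu * A k * lam) / (A k + a k.+1)) *: y k /\
  approx_PG f G P mu sighat (xt k) lam (y k.+1) (u k.+1) (eps k.+1) /\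
  A k.+1 = A k + a k.+1 /\
  v k.+1 = u k.+1 + G (y k.+1) /\
  x k.+1 = ((1 + mu * A k) / (1 + mu * A k.+1)) *: x k
           + ((mu * a k.+1) / (1 + mu * A k.+1)) *: y k.+1
           - (a k.+1 / (1 + mu * A k.+1)) *: v k.+1.
Hypothesis hmin : forall w, (f xs + g xs <= f w + g w)%E.
Local Notation sig := (sighat + sigu).
Local Notation d0 := (nrm (xs - x 0)).
Local Notation rho := (rate sigu mu L).

Lemma L_gt0 : 0 < L. Proof. exact: lt_le_trans hmu hmuL. Qed.
Lemma lam_gt0 : 0 < lam. Proof. exact: stepsize_gt0 hsu0 hmu hmuL. Qed.
Lemma rho_gt0 : 0 < rho. Proof. exact: rate_gt0 hsu0 hmu hmuL. Qed.

Lemma a_def k : a k.+1 = ((1 + 2 * mu * A k) * lam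
  + Num.sqrt ((1 + 2 * mu * A k) ^+ 2 * lam ^+ 2 + 4 * (1 + mu * A k) * A k * lam)) / 2.
Proof. by case: (halg k). Qed.

Lemma A_succ k : A k.+1 = A k + a k.+1.
Proof. by case: (halg k) => _ [_ [_ []]]. Qed.

Lemma v_def k : v k.+1 = u k.+1 + G (y k.+1).
Proof. by case: (halg k) => _ [_ [_ [_ []]]]. Qed.

Lemma y_approx_PG k :
  approx_PG f G P mu sighat (xt k) lam (y k.+1) (u k.+1) (eps k.+1).
Proof. by case: (halg k) => _ [_ []]. Qed.

Lemma weights k : [/\ 0 <= A k, 0 < a k.+1 & weight_eq lam mu (A k) (a k.+1)].
Proof. exact: weights_spec lam_gt0 hmu hA0 a_def A_succ k. Qed.

Local Notation al k := ((a k.+1 - mu * A k * lam) / (A k + a k.+1)).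

Lemma xt_comb k : xt k = al k *: x k + (1 - al k) *: y k.
Proof.
have [hAk hak _] := weights k.
case: (halg k) => _ [-> _]; congr (_ + _ *: _).
by field; rewrite gt_eqF // ltr_wpDl.
Qed.

Lemma al_bounds k : 0 <= al k <= 1.
Proof.
have [hAk hak heq] := weights k.
exact (extrapolation_weight_bounds lam_gt0 hmu hAk hak heq).
Qed.

(* The update of x^k, written relative to y^{k+1} as in potential_step_ineq. *)
Lemma x_succ k : xs - x k.+1 =
  xs - y k.+1 - (((1 + mu * A k) / (1 + mu * (A k + a k.+1))) *: (x k - y k.+1)
                 - (a k.+1 / (1 + mu * (A k + a k.+1))) *: v k.+1).
Proof.
have [hAk hak _] := weights k.
have hpos : 0 < 1 + mu * (A k + a k.+1).
  by have := mulr_gt0 hmu (ltr_wpDl hAk hak); lra.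
case: (halg k) => _ [_ [_ [hAs [_ ->]]]]; rewrite hAs.
by apply/rowP => i; rewrite !mxE; field; rewrite gt_eqF.
Qed.

(* The value of h = f + g, as a real number (meaningful where f and g are finite). *)
Definition hval (w : V) : R := fine (f w) + fine (g w).

(* Every y^{k+1} has finite value: an epsilon-subgradient exists there and
   f is finite somewhere. *)
Lemma f_y_fin k : f (y k.+1) \is a fin_num.
Proof.
have [_ [hsub _]] := y_approx_PG k; case: hfprop => hnotmoo [z hz].
move: (hsub z) (hnotmoo (y k.+1)); case: (f (y k.+1)) => [r| |] // + _.
by rewrite /= leye_eq => /eqP hzoo; move: hz; rewrite hzoo ltxx.
Qed.

Lemma y_in_Omega k : Omega (y k.+1).
Proof. by apply: hdom; rewrite /dom /= -(fineK (f_y_fin k)) ltry. Qed.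

Lemma g_y_fin k : g (y k.+1) \is a fin_num.
Proof.
by have [[r hr hfin] _] := hgrad (y_in_Omega k); rewrite hfin // subrr nrm0.
Qed.

Lemma xs_fin : f xs \is a fin_num /\ g xs \is a fin_num.
Proof.
case: hsum_fin => z hz; have := le_lt_trans (hmin z) hz.
case: hfprop hgprop => hfnotmoo _ [hgnotmoo _].
move: (hfnotmoo xs) (hgnotmoo xs).
by case: (f xs) => [?| |] //; case: (g xs) => [?| |].
Qed.

Lemma lower_model k w : f w \is a fin_num -> g w \is a fin_num ->
  hval (y k.+1) - eps k.+1 + ip (v k.+1) (w - y k.+1)
    + mu / 2 * nrm (w - y k.+1) ^+ 2 <= hval w.
Proof.
move=> hfw hgw; have [_ [hsub _]] := y_approx_PG k.
have hf := hsub w; rewrite -(fineK hfw) -(fineK (f_y_fin k)) in hf.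
rewrite -EFinN -!EFinD lee_fin in hf.
have hg := strongly_convex_gradient_ineq (ltW hmu) hgprop.1 hgsc
  (hgrad (y_in_Omega k)) w.
rewrite -(fineK hgw) -(fineK (g_y_fin k)) -EFinD lee_fin in hg.
rewrite /hval v_def ipDl; lra.
Qed.

Lemma relative_error k :
  nrm (lam *: v k.+1 + y k.+1 - xt k) ^+ 2 / (1 + lam * mu) + 2 * lam * eps k.+1
    <= sig ^+ 2 * nrm (y k.+1 - xt k) ^+ 2.
Proof.
have [heps [_ herr]] := y_approx_PG k; have [hPO _] := hproj (xt k).
have hlipy : nrm (G (y k.+1) - G (P (xt k))) <= L * nrm (y k.+1 - xt k).
  apply: le_trans (hlip (y_in_Omega k) hPO) _.
  by rewrite ler_wpM2l ?(ltW L_gt0) // (proj_closer hOcvx (hproj _) (y_in_Omega k)).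
rewrite v_def.
exact: (relative_error_transfer lam_gt0 hmu hsh (ltW hsu0) heps
  (stepsize_eq hsu0 hmu hmuL) hlipy herr).
Qed.

Definition potential k : R :=
  A k * (hval (y k) - hval xs) + (1 + mu * A k) / 2 * nrm (xs - x k) ^+ 2.

(* potential_step_ineq applied to the iterates, with the model at x*
   bounded by h* (lower_model) and the nonnegative error slack dropped. *)
Lemma potential_step k : potential k.+1 <=
  A k * (hval (y k.+1) - eps k.+1 + ip (v k.+1) (y k - y k.+1)
         + mu / 2 * nrm (y k - y k.+1) ^+ 2 - hval xs)
  + (1 + mu * A k) / 2 * nrm (xs - x k) ^+ 2.
Proof.
have [hAk hak heq] := weights k.
have hT : al k *: (x k - y k.+1) + (1 - al k) *: (y k - y k.+1) = xt k - y k.+1.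
  by rewrite xt_comb; apply/rowP => i; rewrite !mxE; ring.
have herr : nrm (lam *: v k.+1 - (xt k - y k.+1)) ^+ 2 / (1 + lam * mu)
    + 2 * lam * eps k.+1 <= sig ^+ 2 * nrm (xt k - y k.+1) ^+ 2.
  have -> : lam *: v k.+1 - (xt k - y k.+1) = lam *: v k.+1 + y k.+1 - xt k.
    by apply/rowP => i; rewrite !mxE; ring.
  by rewrite nrmB; exact: relative_error.
have := @potential_step_ineq _ _ (A k) (a k.+1) lam mu (sig ^+ 2) (eps k.+1)
  (hval (y k.+1)) (x k - y k.+1) (y k - y k.+1) (xs - y k.+1) (v k.+1) hAk hak hmu heq.
rewrite /= {}hT => /(_ herr); rewrite -x_succ.
have -> : xs - y k.+1 - (x k - y k.+1) = xs - x k.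
  by apply/rowP => i; rewrite !mxE; ring.
have [hfxs hgxs] := xs_fin.
have hmodel := ler_wpM2l (ltW hak) (lower_model k hfxs hgxs).
have hslack : 0 <= (1 - sig ^+ 2) * (A k + a k.+1) / (2 * lam) * nrm (xt k - y k.+1) ^+ 2.
  have hsig2 : 0 <= 1 - sig ^+ 2.
    have hs0 : 0 <= sig by rewrite addr_ge0 // ltW.
    have hs1 : sig <= 1 by have := hsig; lra.
    by rewrite subr_ge0 expr_le1.
  apply/mulr_ge0/sqr_ge0/divr_ge0; last by rewrite mulr_ge0 // ltW // lam_gt0.
  by rewrite mulr_ge0 // addr_ge0 // ltW.
rewrite /potential A_succ; lra.
Qed.

Lemma potential_nonincreasing k : potential k.+1 <= potential k.
Proof.
apply: le_trans (potential_step k) _; rewrite /potential lerD2r.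
case: k => [|k]; first by rewrite hA0 !mul0r.
have [hAk _ _] := weights k.+1.
by rewrite ler_wpM2l // lerD2r (lower_model k.+1 (f_y_fin k) (g_y_fin k)).
Qed.

Lemma potential_bound k : potential k <= d0 ^+ 2 / 2.
Proof.
elim: k => [|k IH]; last exact: le_trans (potential_nonincreasing k) IH.
by rewrite /potential hA0 mul0r mulr0 addr0 add0r; lra.
Qed.

Lemma optimality_gap k :
  mu / 2 * nrm (xs - y k.+1) ^+ 2 <= hval (y k.+1) - hval xs.
Proof.
have [hfxs hgxs] := xs_fin; rewrite nrmB /hval.
apply: (minimizer_quadratic_growth (ltW hmu) hfprop.1 hgprop.1 hfcvx hgsc
  (esym (fineK (f_y_fin k))) (esym (fineK (g_y_fin k)))
  (esym (fineK hfxs)) (esym (fineK hgxs)) hmin).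
Qed.

Local Notation dist_bound j := (L / (sigu * mu) * d0 ^+ 2 * rho ^+ j).

(* Since the potential stays below d0^2 / 2 while A_{j+1} grows like
   rho^{-j}, both distances and the optimality gap decay like rho^j. *)
Lemma iterate_bounds j :
  [/\ nrm (xs - y j.+1) ^+ 2 <= dist_bound j,
      nrm (xs - x j.+1) ^+ 2 <= dist_bound j &
      hval (y j.+1) - hval xs <= L * d0 ^+ 2 / (2 * sigu) * rho ^+ j].
Proof.
have hpot := potential_bound j.+1; rewrite /potential in hpot.
have [hA _ _] := weights j.+1.
have hgrow := weights_geometric lam_gt0 hmu hA0 a_def A_succ hsu0 hmuL
  (stepsize_lower hsu0 hmu hmuL) j.
have hq : 0 <= rho ^+ j by rewrite exprn_ge0 // ltW // rho_gt0.
have hgap := optimality_gap j.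
set D := hval (y j.+1) - hval xs in hgap hpot *.
set Ny := nrm (xs - y j.+1) ^+ 2 in hgap *.
set Nx := nrm (xs - x j.+1) ^+ 2 in hpot *.
have hNy : 0 <= Ny := sqr_ge0 _; have hNx : 0 <= Nx := sqr_ge0 _.
have hD : 0 <= D by apply: le_trans hgap; rewrite mulr_ge0 // divr_ge0 // ltW.
have hAD : A j.+1 * (mu / 2 * Ny) <= A j.+1 * D by rewrite ler_wpM2l.
have hAD0 : 0 <= A j.+1 * D := mulr_ge0 hA hD.
have hx0 : 0 <= (1 + mu * A j.+1) / 2 * Nx.
  by rewrite mulr_ge0 // divr_ge0 // addr_ge0 // mulr_ge0 // ltW.
split.
- by apply: (weighted_bound hmu L_gt0 hsu0 hNy hq _ hgrow); lra.
- by apply: (weighted_bound hmu L_gt0 hsu0 hNx hq _ hgrow); lra.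
have hmAD : mu * A j.+1 * D <= mu * (d0 ^+ 2 / 2).
  by rewrite -mulrA ler_wpM2l ?(ltW hmu) //; lra.
have -> : L * d0 ^+ 2 / (2 * sigu) * rho ^+ j
        = L / (sigu * mu) * (mu * (d0 ^+ 2 / 2)) * rho ^+ j.
  by field; rewrite !gt_eqF.
exact: weighted_bound hmu L_gt0 hsu0 hD hq hmAD hgrow.
Qed.

Lemma linear_rate_a k : (1 <= k)%N ->
  ((f (y k) + g (y k)) - (f xs + g xs) <=
     (L * d0 ^+ 2 / (2 * sigu) * rho ^+ k.-1)%:E)%E /\
  Num.max (nrm (xs - y k)) (nrm (xs - x k))
    <= Num.sqrt (L / (sigu * mu)) * d0 * rho `^ (k.-1%:R / 2).
Proof.
case: k => [//|j] _ /=; have [hy hx hgap] := iterate_bounds j.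
have [hfxs hgxs] := xs_fin; split.
  rewrite -(fineK (f_y_fin j)) -(fineK (g_y_fin j)) -(fineK hfxs) -(fineK hgxs).
  by rewrite -!EFinD lee_fin.
have hq : 0 <= rho ^+ j by rewrite exprn_ge0 // ltW // rho_gt0.
have hc : 0 <= L / (sigu * mu) by rewrite divr_ge0 ?mulr_ge0 // ltW // L_gt0.
rewrite powR_half ?(ltW rho_gt0) // -sqrt_scaled ?nrm_ge0 // ge_max.
by apply/andP; split; apply: le_sqrt_of_sqr; rewrite ?nrm_ge0.
Qed.

Lemma dist_bound_const_ge0 : 0 <= L / (sigu * mu) * d0 ^+ 2.
Proof.
have hL := L_gt0.
by rewrite mulr_ge0 ?sqr_ge0 // divr_ge0 ?mulr_ge0 // ltW.
Qed.

Lemma dist_bound_ge0 j : 0 <= dist_bound j.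
Proof.
have hrho := rho_gt0.
by rewrite mulr_ge0 ?dist_bound_const_ge0 // exprn_ge0 // ltW.
Qed.

Lemma dist_bound_succ j : dist_bound j.+1 <= dist_bound j.
Proof.
have hrho := rho_gt0.
rewrite ler_wpM2l ?dist_bound_const_ge0 //.
by rewrite exprS ler_piMl ?rate_le1 // exprn_ge0 // ltW.
Qed.

Lemma xt_dist j : nrm (y j.+2 - xt j.+1) <= 2 * Num.sqrt (dist_bound j).
Proof.
have [hy hx _] := iterate_bounds j; have [hy2 _ _] := iterate_bounds j.+1.
set DE := Num.sqrt (dist_bound j).
have hnY2 : nrm (xs - y j.+2) <= DE.
  by apply: le_sqrt_of_sqr; [exact: nrm_ge0 | exact: le_trans hy2 (dist_bound_succ j)].
have hnY : nrm (xs - y j.+1) <= DE by apply: le_sqrt_of_sqr => //; exact: nrm_ge0.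
have hnX : nrm (xs - x j.+1) <= DE by apply: le_sqrt_of_sqr => //; exact: nrm_ge0.
have /andP[hal0 hal1] := al_bounds j.+1.
have -> : y j.+2 - xt j.+1 = (al j.+1 *: (xs - x j.+1) + (1 - al j.+1) *: (xs - y j.+1))
                            - (xs - y j.+2).
  by rewrite xt_comb; apply/rowP => i; rewrite !mxE; ring.
apply: le_trans (nrmD _ _) _; rewrite nrmN.
apply: le_trans (lerD (nrm_comb _ _ _) (lexx _)) _.
have hal1' : 0 <= 1 - al j.+1 by rewrite subr_ge0.
rewrite (ger0_norm hal0) (ger0_norm hal1').
have := ler_wpM2l hal0 hnX; have := ler_wpM2l hal1' hnY; lra.
Qed.

(* The error criterion gives 2 lambda eps <= sigma^2 |y - tilde x|^2, and
   lambda L >= sigu. *)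
Lemma eps_rate j :
  eps j.+2 <= 3 * sig ^+ 2 * d0 ^+ 2 * L ^+ 2 / (sigu ^+ 2 * mu) * rho ^+ j.
Proof.
have hL := L_gt0; have hlam := lam_gt0; have [heps _] := y_approx_PG j.+1.
have hE := dist_bound_ge0 j.
have hr2 : nrm (y j.+2 - xt j.+1) ^+ 2 <= 4 * dist_bound j.
  have := xt_dist j; have := sqr_sqrtr hE; have := sqrtr_ge0 (dist_bound j).
  have := nrm_ge0 (y j.+2 - xt j.+1); nra.
have hres : 0 <= nrm (lam *: v j.+2 + y j.+2 - xt j.+1) ^+ 2 / (1 + lam * mu).
  by rewrite divr_ge0 ?sqr_ge0 // addr_ge0 // mulr_ge0 // ltW.
have h2 : lam * eps j.+2 <= 2 * sig ^+ 2 * dist_bound j.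
  have := relative_error j.+1; have := ler_wpM2l (sqr_ge0 sig) hr2; lra.
have h1 : eps j.+2 * sigu <= eps j.+2 * (lam * L).
  by rewrite ler_wpM2l // stepsize_lower.
have h3 : L * (lam * eps j.+2) <= L * (2 * sig ^+ 2 * dist_bound j).
  by rewrite ler_wpM2l // ltW.
have h4 : 0 <= sig ^+ 2 * dist_bound j * L := mulr_ge0 (mulr_ge0 (sqr_ge0 _) hE) (ltW hL).
have -> : 3 * sig ^+ 2 * d0 ^+ 2 * L ^+ 2 / (sigu ^+ 2 * mu) * rho ^+ j
    = 3 * sig ^+ 2 * dist_bound j * L / sigu by field; rewrite !gt_eqF.
rewrite ler_pdivlMr //; lra.
Qed.

Lemma residual_factor :
  Num.sqrt (1 + lam * mu) <= 3 * Num.sqrt (1 + sigu * mu / L).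
Proof.
have hL := L_gt0; have hlam := lam_gt0.
have hx : 0 <= sigu * mu / L by rewrite divr_ge0 ?mulr_ge0 // ltW.
have hlm : lam * mu <= 2 * (sigu * mu / L).
  rewrite mulrA ler_pdivlMr //.
  have := ler_wpM2r (ltW hmu) (stepsize_upper hsu0 hmu hmuL hsu1); lra.
rewrite -ler_sqr ?nnegrE ?mulr_ge0 ?sqrtr_ge0 // exprMn !sqr_sqrtr //.
- by lra.
- by rewrite addr_ge0.
- by rewrite addr_ge0 // mulr_ge0 // ltW.
Qed.

Lemma v_rate_dist j : sigu * nrm (v j.+2)
  <= 6 * (1 + sig * Num.sqrt (1 + sigu * mu / L)) * L * Num.sqrt (dist_bound j).
Proof.
have hL := L_gt0; have hlam := lam_gt0; have [heps _] := y_approx_PG j.+1.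
have hlm : 0 < 1 + lam * mu by have := mulr_gt0 hlam hmu; lra.
set c := Num.sqrt (1 + lam * mu); set c' := Num.sqrt (1 + sigu * mu / L).
set r := nrm (y j.+2 - xt j.+1); set p := nrm (lam *: v j.+2 + y j.+2 - xt j.+1).
set DE := Num.sqrt (dist_bound j).
have hc : 0 < c by rewrite sqrtr_gt0.
have hc2 : c ^+ 2 = 1 + lam * mu by rewrite sqr_sqrtr // ltW.
have hr : 0 <= r := nrm_ge0 _; have hp : 0 <= p := nrm_ge0 _.
have hc' : 0 <= c' := sqrtr_ge0 _; have hDE : 0 <= DE := sqrtr_ge0 _.
have hsig0 : 0 <= sig by rewrite addr_ge0 // ltW.
have hpc : p <= c * sig * r.
  have herr := relative_error j.+1; rewrite -/p -/r -hc2 in herr.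
  have hle : 0 <= 2 * lam * eps j.+2 := mulr_ge0 (mulr_ge0 (ler0n _ 2) (ltW hlam)) heps.
  have : (p / c) ^+ 2 <= (sig * r) ^+ 2 by rewrite expr_div_n exprMn; lra.
  rewrite ler_sqr ?nnegrE ?divr_ge0 ?mulr_ge0 ?(ltW hc) //.
  by rewrite ler_pdivrMr // mulrC mulrA.
have hlv : lam * nrm (v j.+2) <= p + r.
  have e : lam *: v j.+2 = (lam *: v j.+2 + y j.+2 - xt j.+1) + (xt j.+1 - y j.+2).
    by apply/rowP => i; rewrite !mxE; ring.
  rewrite -(ger0_norm (ltW hlam)) -nrmZ e.
  by apply: le_trans (nrmD _ _) _; rewrite (nrmB (xt j.+1)).
have hr2 : r <= 2 * DE := xt_dist j.
have hcc : c <= 3 * c' := residual_factor.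
have hv : sigu * nrm (v j.+2) <= L * (lam * nrm (v j.+2)).
  rewrite mulrA [L * _]mulrC ler_wpM2r ?nrm_ge0 //.
  exact: stepsize_lower hsu0 hmu hmuL.
have h1 : c * sig * r <= 3 * c' * sig * (2 * DE).
  by rewrite ler_pM // ?mulr_ge0 ?(ltW hc) // ler_wpM2r.
have hlv' : lam * nrm (v j.+2) <= 6 * (1 + sig * c') * DE.
  by apply: le_trans hlv _; lra.
apply: le_trans hv _; have := ler_wpM2l (ltW hL) hlv'; lra.
Qed.

Lemma linear_rate_b k : (1 <= k)%N ->
  (exists2 w, eps_subdiff f (eps k.+1) (y k.+1) w & v k.+1 = w + G (y k.+1)) /\
  nrm (v k.+1) <= 6 * d0 * L `^ (3 / 2) / (mu `^ (1 / 2) * sigu `^ (3 / 2))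
                   * (1 + sig * Num.sqrt (1 + sigu * mu / L)) * rho `^ (k.-1%:R / 2) /\
  eps k.+1 <= 3 * sig ^+ 2 * d0 ^+ 2 * L ^+ 2 / (sigu ^+ 2 * mu) * rho ^+ k.-1.
Proof.
case: k => [//|j] _ /=; split.
  by exists (u j.+2); [case: (y_approx_PG j.+1) => _ [] | exact: v_def].
split; last exact: eps_rate.
rewrite rate_b_constant ?nrm_ge0 ?L_gt0 ?(ltW rho_gt0) // ler_pdivlMr // mulrC.
exact: v_rate_dist.
Qed.

End Algorithm4.

Unset Implicit Arguments.

Theorem theorem5p3 (R : realType) (n : nat)
    (f g : 'rV[R]_n -> \bar R) (mu L : R) (Omega : set 'rV[R]_n)
    (P G : 'rV[R]_n -> 'rV[R]_n)
    (sighat sigu : R)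
    (x y u v xt : nat -> 'rV[R]_n) (eps A a : nat -> R)
    (xs : 'rV[R]_n) :
  (* standing assumptions *)
  proper_fn f -> lsc_fn f -> convex_fn f ->
  proper_fn g -> lsc_fn g -> convex_fn g ->
  (exists z, ((f z + g z) < +oo)%E) ->
  0 < mu -> strongly_convex_fn mu g ->
  (exists z, Omega z) -> closed_set Omega -> cvx_set Omega ->
  dom f `<=` Omega ->
  (forall z, is_proj Omega z (P z)) ->
  (exists2 U : set 'rV[R]_n, open_set U /\ Omega `<=` U &
     forall z, U z -> has_gradient g z (G z)) ->
  0 < L ->
  (forall z w, Omega z -> Omega w -> nrm (G z - G w) <= L * nrm (z - w)) ->
  (* additional assumption *)
  mu <= L ->
  (* Algorithm 4 *)
  0 <= sighat -> 0 < sigu <= 1 -> sigu + sighat < 1 ->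
  let lam := sigu / (Num.sqrt ((sigu * mu / 2) ^+ 2 + L ^+ 2) - sigu * mu / 2) in
  A 0%N = 0 ->
  (forall k,
     a k.+1 = ((1 + 2 * mu * A k) * lam
               + Num.sqrt ((1 + 2 * mu * A k) ^+ 2 * lam ^+ 2
                           + 4 * (1 + mu * A k) * A k * lam)) / 2 /\
     xt k = ((a k.+1 - mu * A k * lam) / (A k + a k.+1)) *: x k
            + ((A k + mu * A k * lam) / (A k + a k.+1)) *: y k /\
     approx_PG f G P mu sighat (xt k) lam (y k.+1) (u k.+1) (eps k.+1) /\
     A k.+1 = A k + a k.+1 /\
     v k.+1 = u k.+1 + G (y k.+1) /\
     x k.+1 = ((1 + mu * A k) / (1 + mu * A k.+1)) *: x k
              + ((mu * a k.+1) / (1 + mu * A k.+1)) *: y k.+1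
              - (a k.+1 / (1 + mu * A k.+1)) *: v k.+1) ->
  (* x* is the minimizer of h = f + g *)
  (forall w, (f xs + g xs <= f w + g w)%E) ->
  let sig := sighat + sigu in
  let d0 := nrm (xs - x 0%N) in
  let gam := Num.sqrt (sigu / (1 + sigu)) in
  let rho := 1 - gam * Num.sqrt (mu / L) in
  (* (a) *)
  (forall k, (1 <= k)%N ->
     ((f (y k) + g (y k)) - (f xs + g xs) <=
        (L * d0 ^+ 2 / (2 * sigu) * rho ^+ k.-1)%:E)%E /\
     Num.max (nrm (xs - y k)) (nrm (xs - x k))
       <= Num.sqrt (L / (sigu * mu)) * d0 * rho `^ (k.-1%:R / 2)) /\
  (* (b) *)
  (forall k, (1 <= k)%N ->
     (exists2 w, eps_subdiff f (eps k.+1) (y k.+1) w & v k.+1 = w + G (y k.+1)) /\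
     nrm (v k.+1) <= 6 * d0 * L `^ (3 / 2) / (mu `^ (1 / 2) * sigu `^ (3 / 2))
                      * (1 + sig * Num.sqrt (1 + sigu * mu / L)) * rho `^ (k.-1%:R / 2) /\
     eps k.+1 <= 3 * sig ^+ 2 * d0 ^+ 2 * L ^+ 2 / (sigu ^+ 2 * mu) * rho ^+ k.-1).
Proof.
move=> hfprop _ hfcvx hgprop _ _ hsum hmu hgsc _ _ hOcvx hdom hproj [U [_ hOU] hgradU].
move=> _ hlip hmuL hsh /andP[hsu0 hsu1] hsig lam hA0 halg hmin sig d0 gam rho.
have hgrad z : Omega z -> has_gradient g z (G z) by move/hOU/hgradU.
split=> k hk.
- exact: (linear_rate_a hfprop hfcvx hgprop hsum hmu hgsc hOcvx hdom hproj hgrad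
    hlip hmuL hsh hsu0 hsig hA0 halg hmin hk).
- exact: (linear_rate_b hfprop hfcvx hgprop hsum hmu hgsc hOcvx hdom hproj hgrad
    hlip hmuL hsh hsu0 hsu1 hsig hA0 halg hmin hk).
Qed.
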